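(* Let $n$ be a positive integer, $q=2^n$, and $A,B,\delta\in\mathbb{F}_q$ with $A\neq0$ and $\frac{B^2}{A^2}+\frac{B}{A}+\delta\neq0$. Let $\mathcal{S}=\sum_{x\in\mathbb{F}_q}(-1)^{\mathrm{Tr}_1^n\left(\frac{Ax+B}{x^2+x+\delta}\right)}$ and let $C=(AB+A^2\delta)^{1/2}$ (the unique square root in $\mathbb{F}_q$). Then: (1) if $\mathrm{Tr}_1^n(\delta)=1$, $\mathcal{S}=(-1)^{\mathrm{Tr}_1^n(A)}+(-1)^{\mathrm{Tr}_1^n(\frac{B+C}{A})}-\mathcal{K}_n(B+C)(-1)^{\mathrm{Tr}_1^n(A)}$; (2) if $\mathrm{Tr}_1^n(\delta)=0$, $\mathcal{S}=-(-1)^{\mathrm{Tr}_1^n(A)}-(-1)^{\mathrm{Tr}_1^n(\frac{B+C}{A})}+\mathcal{K}_n(B+C)(-1)^{\mathrm{Tr}_1^n(A)}+2$.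
   Context: $\mathrm{Tr}_1^n$ is the absolute trace of $\mathbb{F}_{2^n}$. Division by zero uses the convention $\frac10=0$ (in particular the summand is $(-1)^0=1$ when $x^2+x+\delta=0$). The binary Kloosterman sum is $\mathcal{K}_n(a)=\sum_{x\in\mathbb{F}_{2^n}}(-1)^{\mathrm{Tr}_1^n(\frac1x+ax)}$. *)

From HB Require Import structures.
From mathcomp Require Import all_boot all_order all_algebra all_field.
Set Implicit Arguments. Unset Strict Implicit. Unset Printing Implicit Defensive.
Import GRing.Theory.
Local Open Scope ring_scope.

Definition abstr (F : finFieldType) (n : nat) (x : F) : F :=
  \sum_(i < n) x ^+ (2 ^ i).

(* (-1)^{Tr(x)} as an integer: 1 if Tr x = 0, -1 otherwise (Tr x is 0 or 1). *)
Definition chi (F : finFieldType) (n : nat) (x : F) : int :=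
  if abstr n x == 0 then 1 else -1.

(* Binary Kloosterman sum K_n(a) = sum_x (-1)^{Tr(1/x + a x)}, with 1/0 = 0
   (MathComp's inverse satisfies 0^-1 = 0). *)
Definition kloosterman (F : finFieldType) (n : nat) (a : F) : int :=
  \sum_(x : F) chi n (x^-1 + a * x).

(* Grouping the sum by values, S = sum_y chi(y) N(y) with N(y) the number of
   x such that (A x + B) / (x^2 + x + delta) = y.  Clearing denominators and
   rescaling x turns this into an Artin-Schreier equation t^2 + t = e, which
   has 1 + chi(e) solutions; hence N(0) = 2 + chi(delta), N(A) = 1 and
   N(y) = 1 + chi(e(y)) otherwise.  Substituting y = z + A and using
   C^2 = A B + A^2 delta, y + e(y) equals (A + delta) + (z + (B + C)/z) plus a
   term of the form u^2 + u, so the sum collapses to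
   chi(delta) + chi(A + delta) (K(B + C) - 1).  Likewise (B + C)/A and delta
   differ by u^2 + u, so chi((B + C)/A) = chi(delta). *)

From mathcomp Require Import all_boot all_order all_algebra all_field.
From mathcomp Require Import ring zify.

Set Implicit Arguments.
Unset Strict Implicit.
Unset Printing Implicit Defensive.
Import Order.TTheory GRing.Theory Num.Theory.
Local Open Scope ring_scope.

Lemma sum_comp_card_fiber (T U : finType) (R : pzSemiRingType) (g : U -> R) (f : T -> U) :
  \sum_(x : T) g (f x) = \sum_(y : U) g y * #|[set x | f x == y]|%:R.
Proof.
rewrite (partition_big f predT) //=; apply: eq_bigr => y _.
rewrite mulr_natr -sumr_const; apply: eq_big => [x|x /eqP ->]; by rewrite ?inE.
Qed.

Lemma exists_nonroot (F : finFieldType) (p : {poly F}) :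
  p != 0 -> (size p <= #|F|)%N -> exists x, ~~ root p x.
Proof.
move=> p_neq0 size_p; apply/existsP; apply: contraLR size_p => /existsPn p_F.
rewrite -ltnNge cardE max_poly_roots ?enum_uniq //.
by apply/allP => x _; rewrite -[root p x]negbK p_F.
Qed.

Lemma addr_eq0_pchar2 (R : nzRingType) :
  2 \in [pchar R] -> forall x y : R, (x + y == 0) = (x == y).
Proof. by move=> pchar2 x y; rewrite addr_eq0 (oppr_pchar2 pchar2). Qed.

Section Trace.

Variables (F : finFieldType) (n : nat).
Hypothesis cardF : #|F| = (2 ^ n)%N.

Lemma card_pow2_pchar2 : 2 \in [pchar F].
Proof. exact: card_finPcharP cardF isT. Qed.

Let pchar2 : 2 \in [pchar F] := card_pow2_pchar2.

Lemma abstrD (x y : F) : abstr n (x + y) = abstr n x + abstr n y.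
Proof.
rewrite /abstr -big_split; apply: eq_bigr => i _ /=.
by rewrite exprDn_pchar // pnatX (pnatE _ (isT : prime 2)) pchar2.
Qed.

Lemma abstr0 : abstr n (0 : F) = 0.
Proof. by rewrite /abstr big1 // => i _; rewrite expr0n expn_eq0. Qed.

Lemma abstr_sqr (x : F) : abstr n (x ^+ 2) = abstr n x.
Proof.
rewrite /abstr; case: n cardF => [|m] cardFm; first by rewrite !big_ord0.
rewrite big_ord_recr big_ord_recl /= -exprM -expnS -cardFm expf_card addrC.
by congr (_ + _); apply: eq_bigr => i _; rewrite -exprM -expnS.
Qed.

Lemma sqr_abstr (x : F) : abstr n x ^+ 2 = abstr n x.
Proof.
rewrite -[RHS]abstr_sqr /abstr -(pFrobenius_autE pchar2) rmorph_sum.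
by apply: eq_bigr => i _; rewrite /= pFrobenius_autE -!exprM mulnC.
Qed.

Lemma abstr_artin_schreier (t : F) : abstr n (t ^+ 2 + t) = 0.
Proof. by rewrite abstrD abstr_sqr (addrr_pchar2 pchar2). Qed.

Lemma chi0 : chi n (0 : F) = 1.
Proof. by rewrite /chi abstr0 eqxx. Qed.

Lemma chiD (x y : F) : chi n (x + y) = chi n x * chi n y.
Proof.
have abstr01 (z : F) : abstr n z = 0 \/ abstr n z = 1.
  have /eqP : abstr n z * (abstr n z - 1) = 0.
    by rewrite mulrBr mulr1 -expr2 sqr_abstr subrr.
  by rewrite mulf_eq0 subr_eq0 => /orP[] /eqP; [left | right].
rewrite /chi abstrD.
by case: (abstr01 x) (abstr01 y) => -> [] ->;
  rewrite ?addr0 ?add0r ?(addrr_pchar2 pchar2) ?eqxx ?oner_eq0.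
Qed.

Lemma chi_artin_schreier (t : F) : chi n (t ^+ 2 + t) = 1.
Proof. by rewrite /chi abstr_artin_schreier eqxx. Qed.

Hypothesis n_gt0 : (0 < n)%N.

Lemma exists_abstr_neq0 : exists a : F, abstr n a != 0.
Proof.
pose p : {poly F} := \sum_(i < n) 'X^(2 ^ i).
have p_neq0 : p != 0.
  apply/eqP => /(congr1 (fun q : {poly F} => q`_1)) /eqP.
  rewrite coef0 /p coef_sum; case: n n_gt0 => [//|m _].
  rewrite big_ord_recl coefXn eqxx big1 ?addr0 ?oner_eq0 // => i _.
  by rewrite coefXn expnS; case: (2 ^ i)%N => [|k]; rewrite ?muln0 // mulnS.
have size_p : (size p <= #|F|)%N.
  rewrite cardF; apply: (leq_trans (size_sum _ _ _)); apply/bigmax_leqP => i _.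
  rewrite size_polyXn (leq_trans _ (@leq_pexp2l 2 _ _ isT (ltn_ord i))) //.
  by rewrite expnS mul2n -addnn -addn1 leq_add2l expn_gt0.
have [a] := exists_nonroot p_neq0 size_p.
rewrite /root /p horner_sum; under eq_bigr do rewrite hornerXn.
by exists a.
Qed.

Lemma sum_chi : \sum_(x : F) chi n x = 0.
Proof.
have [a abstr_a] := exists_abstr_neq0.
have chi_a : chi n a = -1 by rewrite /chi (negbTE abstr_a).
have : \sum_(x : F) chi n x = \sum_(x : F) chi n x * chi n a.
  by rewrite (reindex_inj (addIr a)); apply: eq_bigr => x _; rewrite chiD.
rewrite -mulr_suml chi_a mulrN1; move: (\sum_(x : F) chi n x) => s; lia.
Qed.

Lemma artin_schreier_eq (s t : F) :
  (s ^+ 2 + s == t ^+ 2 + t) = (s == t) || (s == t + 1).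
Proof.
rewrite -subr_eq0 (GRing.subr_pchar2 pchar2).
have -> : s ^+ 2 + s + (t ^+ 2 + t) = (s + t) * (s + t + 1).
  by ring: (pcharf0 pchar2).
rewrite mulf_eq0 !(addr_eq0_pchar2 pchar2); congr (_ || _).
by rewrite -[RHS](inj_eq (addIr t)) addrAC (addrr_pchar2 pchar2) add0r.
Qed.

Lemma card_artin_schreier_roots_le2 (e : F) :
  (#|[set t | (t ^+ 2 + t == e)%R]| <= 2)%N.
Proof.
case: (pickP [pred t : F | t ^+ 2 + t == e]) => [t0 /eqP <- | no_root]; last first.
  by rewrite (eq_card0 (A := [set t | _])) // => t; rewrite inE; apply: no_root.
have : [set t | t ^+ 2 + t == t0 ^+ 2 + t0] \subset [set t0; t0 + 1].
  by apply/subsetP => t; rewrite !inE artin_schreier_eq.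
by move/subset_leq_card/leq_trans; apply; rewrite cards2; case: (t0 != _).
Qed.

Lemma artin_schreier_roots_abstr_neq0 (e : F) :
  abstr n e != 0 -> [set t | t ^+ 2 + t == e] = set0.
Proof.
move=> abstr_e; apply/setP => t; rewrite !inE.
by apply: contraNF abstr_e => /eqP <-; rewrite abstr_artin_schreier.
Qed.

Lemma card_artin_schreier_roots (e : F) :
  (#|[set t | t ^+ 2 + t == e]|%:R : int) = 1 + chi n e.
Proof.
pose N (e : F) := #|[set t | t ^+ 2 + t == e]|.
(* Both sides of N_le sum to #|F| over e, so each inequality is an equality. *)
have N_le e' : (N e')%:R <= 1 + chi n e' :> int.
  rewrite /chi; case: ifPn => [_ | /artin_schreier_roots_abstr_neq0].
    by have := card_artin_schreier_roots_le2 e'; rewrite -/(N e'); lia.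
  by rewrite /N => ->; rewrite cards0 subrr.
have sum_N : \sum_(e' : F) (N e')%:R = \sum_(e' : F) (1 + chi n e') :> int.
  rewrite big_split /= sum_chi addr0.
  have /= -> := sum_comp_card_fiber (fun=> (1 : int)) (fun t : F => t ^+ 2 + t).
  by apply: eq_bigr => e' _; rewrite mul1r.
apply/eqP; move/eqP: sum_N; rewrite (leif_sum (fun e' _ => leif_eq (N_le e'))).2.
by move/forallP/(_ e).
Qed.

End Trace.

Lemma kloostermanE (F : finFieldType) n (c : F) :
  kloosterman n c = \sum_(z : F) chi n (z + c / z).
Proof.
rewrite /kloosterman (reindex_inj (@invr_inj F)) /=.
by apply: eq_bigr => x _; rewrite invrK mulrC.
Qed.

Section RationalSum.

Variables (F : finFieldType) (n : nat) (A B delta C : F).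
Hypotheses (cardF : #|F| = (2 ^ n)%N) (n_gt0 : (0 < n)%N) (A_neq0 : A != 0).
Hypothesis no_common_root : (B / A) ^+ 2 + B / A + delta != 0.
Hypothesis C2 : C ^+ 2 = A * B + A ^+ 2 * delta.

Let pchar2 : 2 \in [pchar F] := card_pow2_pchar2 cardF.
Let two0 : 2%:R = 0 :> F := pcharf0 pchar2.

Local Notation f x := ((A * x + B) / (x ^+ 2 + x + delta)).
(* For y <> 0, A the substitution x = ((y + A) / y) t turns f x = y into
   t^2 + t = e y. *)
Local Notation e y := (y * (y * delta + B) / (y + A) ^+ 2).

Lemma numerator_eq0 (x : F) : (A * x + B == 0) = (x == B / A).
Proof.
rewrite (addr_eq0_pchar2 pchar2).
by apply/eqP/eqP => [<- | ->]; [rewrite mulrC mulKf | rewrite mulrC divfK].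
Qed.

Lemma numerator_neq0_at_pole (x : F) : x ^+ 2 + x + delta = 0 -> A * x + B != 0.
Proof.
by move=> pole_x; rewrite numerator_eq0; apply: contraNneq no_common_root => <-; apply/eqP.
Qed.

Lemma fiber_eq (x y : F) : y != 0 ->
  (f x == y) = (y * (x ^+ 2 + x + delta) + (A * x + B) == 0).
Proof.
move=> y_neq0; have [pole_x | d_neq0] := eqVneq (x ^+ 2 + x + delta) 0.
  rewrite pole_x invr0 mulr0 mulr0 add0r eq_sym (negbTE y_neq0).
  by rewrite (negbTE (numerator_neq0_at_pole pole_x)).
by rewrite -{1}(divr1 y) eqr_div ?oner_neq0 // mulr1 eq_sym (addr_eq0_pchar2 pchar2).
Qed.

Lemma card_fiber0 : (#|[set x | f x == 0]|%:R : int) = 2 + chi n delta.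
Proof.
have -> : [set x | f x == 0] = B / A |: [set x : F | x ^+ 2 + x == delta].
  apply/setP => x; rewrite !inE mulf_eq0 invr_eq0 numerator_eq0.
  by rewrite (addr_eq0_pchar2 pchar2).
rewrite cardsU1 inE -(addr_eq0_pchar2 pchar2) no_common_root natrD.
by rewrite (card_artin_schreier_roots cardF n_gt0) addrA.
Qed.

Lemma card_fiberA : #|[set x | f x == A]| = 1%N.
Proof.
suff -> : [set x | f x == A] = [set C / A] by rewrite cards1.
apply/setP => x; rewrite !inE fiber_eq //.
have -> : A * (x ^+ 2 + x + delta) + (A * x + B) = A * (x + C / A) ^+ 2.
  transitivity (A * (x ^+ 2 + (C / A) ^+ 2)); last by ring: two0.
  by rewrite expr_div_n C2; field: two0.
by rewrite mulf_eq0 (negbTE A_neq0) expf_eq0 (addr_eq0_pchar2 pchar2).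
Qed.

Lemma card_fiber (y : F) : y != 0 -> y != A ->
  (#|[set x | f x == y]|%:R : int) = 1 + chi n (e y).
Proof.
move=> y_neq0 y_neqA; have yA_neq0 : y + A != 0 by rewrite (addr_eq0_pchar2 pchar2).
pose c := (y + A) / y; have c_neq0 : c != 0 by rewrite mulf_neq0 ?invr_eq0.
rewrite -(card_artin_schreier_roots cardF n_gt0) -(card_preimset _ (mulfI c_neq0)).
suff -> : *%R c @^-1: [set x | f x == y] = [set t | t ^+ 2 + t == e y] by [].
apply/setP => t; rewrite !inE fiber_eq //.
have -> : y * ((c * t) ^+ 2 + c * t + delta) + (A * (c * t) + B) =
          (y + A) ^+ 2 / y * (t ^+ 2 + t + e y).
  by rewrite /c; field; rewrite y_neq0 yA_neq0.
rewrite !mulf_eq0 invr_eq0 (negbTE y_neq0) (negbTE yA_neq0) /=.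
by rewrite (addr_eq0_pchar2 pchar2).
Qed.

Lemma chi_shift_e (z : F) : z != 0 ->
  chi n (z + A + e (z + A)) = chi n (A + delta) * chi n (z + (B + C) / z).
Proof.
move=> z_neq0; rewrite (addrK_pchar2 pchar2).
have -> : z + A + (z + A) * ((z + A) * delta + B) / z ^+ 2 =
          A + delta + (z + (B + C) / z) + ((C / z) ^+ 2 + C / z).
  by rewrite expr_div_n C2; field: two0.
by rewrite (chiD cardF) (chi_artin_schreier cardF) mulr1 (chiD cardF).
Qed.

Lemma sum_chi_shift_e :
  \sum_(y | y != A) chi n (y + e y) = chi n (A + delta) * (kloosterman n (B + C) - 1).
Proof.
rewrite kloostermanE [in RHS](bigD1 0) //= invr0 mulr0 addr0 chi0 addrAC subrr add0r.
rewrite mulr_sumr (reindex_inj (addIr A)) /=.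
by apply: eq_big => z; rewrite -subr_eq0 addrK // => /chi_shift_e.
Qed.

Lemma sum_chi_rational :
  \sum_(x : F) chi n (f x) = chi n delta + chi n (A + delta) * (kloosterman n (B + C) - 1).
Proof.
have zero_neqA : 0 != A by rewrite eq_sym.
have := sum_chi cardF n_gt0; rewrite (bigD1 A) //= (bigD1 0) //= chi0 => sum_chi_split.
have := sum_chi_shift_e; rewrite (bigD1 0) //= !mul0r addr0 chi0 => sum_e_split.
rewrite sum_comp_card_fiber (bigD1 A) //= card_fiberA mulr1 (bigD1 0) //=.
rewrite card_fiber0 chi0 mul1r.
under eq_bigr => y /andP[y_neqA y_neq0] do
  rewrite card_fiber // mulrDr mulr1 -(chiD cardF).
rewrite big_split /=.
rewrite -sum_e_split; move: sum_chi_split.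
move: (\sum_(i | _) chi n i) (\sum_(i | _) chi n (i + _)) => X Y; lia.
Qed.

Lemma chi_shifted_numerator : chi n ((B + C) / A) = chi n delta.
Proof.
have -> : (B + C) / A = delta + ((C / A) ^+ 2 + C / A).
  by rewrite expr_div_n C2; field: two0.
by rewrite (chiD cardF) (chi_artin_schreier cardF) mulr1.
Qed.

End RationalSum.

Theorem lemma4 (F : finFieldType) (n : nat) (A B delta C : F) :
  (0 < n)%N -> #|F| = (2 ^ n)%N ->
  A != 0 -> (B ^+ 2 / A ^+ 2 + B / A + delta != 0) ->
  C ^+ 2 = A * B + A ^+ 2 * delta ->
  let S := \sum_(x : F) chi n ((A * x + B) / (x ^+ 2 + x + delta)) in
  (abstr n delta = 1 ->
     S = chi n A + chi n ((B + C) / A) - kloosterman n (B + C) * chi n A) /\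
  (abstr n delta = 0 ->
     S = - chi n A - chi n ((B + C) / A) + kloosterman n (B + C) * chi n A + 2).
Proof.
move=> n_gt0 cardF A_neq0 no_common_root C2 S.
rewrite -expr_div_n in no_common_root.
rewrite /S (sum_chi_rational cardF n_gt0 A_neq0 no_common_root C2).
rewrite (chi_shifted_numerator cardF A_neq0 C2) (chiD cardF).
by split=> abstr_delta; rewrite [chi n delta]/chi abstr_delta ?eqxx ?oner_eq0; ring.
Qed.
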